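(* Let $H$ be a homogeneous relation on a finite set $V$. If $H$ fulfills A2 or A3, then $\mathcal F_H$ is a weakly partitive family. If $H$ fulfills A1, then $\mathcal F_H$ is a partitive family.
   Context: $V$ is a finite set. A reflectless triple is a triple $(x,y,z)\in V^3$ with $x\neq y$ and $x\neq z$, written $(x|yz)$. A homogeneous relation $H$ on $V$ is a set of reflectless triples (we write $H(s|xy)$ when $(s|xy)\in H$, and $H(s|xy)$ is considered false when $(s|xy)$ is not reflectless) such that for every $s\in V$ the binary relation $H_s=\{(x,y): H(s|xy)\}$ is an equivalence relation on $V\setminus\{s\}$. For $X\subseteq V$ and $s\notin X$, $s$ distinguishes $X$ if there are $x,y\in X$ with not $H(s|xy)$. A homogeneous set is a nonempty $M\subseteq V$ such that no element of $V\setminus M$ distinguishes $M$; $\mathcal F_H$ denotes the family of homogeneous sets. Axioms (required for all elements for which every triple appearing is reflectless): A1: $H(x|yz)\wedge H(y|xz)\Rightarrow H(z|xy)$. A2: $H(x|st)\wedge H(y|st)\wedge H(t|xy)\Rightarrow H(s|xy)$. A3: $H(x|st)\wedge H(y|st)\wedge H(t|sx)\wedge H(t|sy)\Rightarrow H(s|xy)$. Two sets $A,B$ overlap if $A\cap B$, $A\setminus B$, $B\setminus A$ are all nonempty. A family $\mathcal F\subseteq\mathcal P(V)$ is weakly partitive if it contains $V$ and every singleton $\{v\}$, $v\in V$, and for all overlapping $A,B\in\mathcal F$ the sets $A\cap B$, $A\cup B$, $A\setminus B$ belong to $\mathcal F$. It is partitive if moreover for all overlapping $A,B\in\mathcal F$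 the symmetric difference $A\Delta B=(A\setminus B)\cup(B\setminus A)$ belongs to $\mathcal F$. *)

From mathcomp Require Import all_boot.
Set Implicit Arguments. Unset Strict Implicit. Unset Printing Implicit Defensive.

Section Defs.
Variable V : finType.

(* A ternary relation on V: [H s x y] stands for H(s|xy). *)
Definition trel := V -> V -> V -> bool.

Definition reflectless (s x y : V) : bool := (s != x) && (s != y).

Definition homogeneous_relation (H : trel) : Prop :=
  (forall s x y, H s x y -> reflectless s x y) /\
  (forall s x, x != s -> H s x x) /\
  (forall s x y, H s x y -> H s y x) /\
  (forall s x y z, H s x y -> H s y z -> H s x z).

Definition axiomA1 (H : trel) : Prop :=
  forall x y z,
    reflectless x y z -> reflectless y x z -> reflectless z x y ->
    H x y z -> H y x z -> H z x y.

Definition axiomA2 (H : trel) : Prop :=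
  forall x y s t,
    reflectless x s t -> reflectless y s t -> reflectless t x y ->
    reflectless s x y ->
    H x s t -> H y s t -> H t x y -> H s x y.

Definition axiomA3 (H : trel) : Prop :=
  forall x y s t,
    reflectless x s t -> reflectless y s t -> reflectless t s x ->
    reflectless t s y -> reflectless s x y ->
    H x s t -> H y s t -> H t s x -> H t s y -> H s x y.

Definition distinguishes (H : trel) (s : V) (X : {set V}) : bool :=
  [exists x in X, exists y in X, ~~ H s x y].

Definition homogeneous_set (H : trel) (M : {set V}) : bool :=
  (M != set0) && [forall s in ~: M, ~~ distinguishes H s M].

Definition overlap (A B : {set V}) : bool :=
  [&& A :&: B != set0, A :\: B != set0 & B :\: A != set0].

Definition weakly_partitive (F : {set V} -> bool) : Prop :=
  F [set: V] /\ (forall v, F [set v]) /\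
  (forall A B, F A -> F B -> overlap A B ->
     [/\ F (A :&: B), F (A :|: B) & F (A :\: B)]).

Definition partitive (F : {set V} -> bool) : Prop :=
  weakly_partitive F /\
  (forall A B, F A -> F B -> overlap A B -> F ((A :\: B) :|: (B :\: A))).

End Defs.

From mathcomp Require Import all_boot.
Set Implicit Arguments. Unset Strict Implicit. Unset Printing Implicit Defensive.

(* An element s outside A :|: B sees A and B each as a single H_s-class, and a
   common element of A and B glues the two classes: this settles A :&: B and
   A :|: B for any homogeneous relation.  Only some s in A :&: B can
   distinguish A :\: B.  For x, y in A :\: B and t in B :\: A, homogeneity of
   A and B provides H(x|st), H(y|st) and H(t|xy), H(t|sx), H(t|sy): exactly the
   premises of A2 and of A3, whose conclusion is H(s|xy).  Under A1, the facts
   H(x|ts) and H(t|xs) give H(s|xt), so every element of the symmetric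
   difference is H_s-equivalent to t. *)

Section HomogeneousSets.
Variables (V : finType) (H : V -> V -> V -> bool).
Hypothesis homH : homogeneous_relation H.

Let H_reflectless : forall s x y, H s x y -> reflectless s x y := proj1 homH.
Let H_refl : forall s x, x != s -> H s x x := proj1 (proj2 homH).
Let H_sym : forall s x y, H s x y -> H s y x := proj1 (proj2 (proj2 homH)).
Let H_trans : forall s x y z, H s x y -> H s y z -> H s x z :=
  proj2 (proj2 (proj2 homH)).

Lemma H_neq s x y : H s x y -> (x != s) && (y != s).
Proof. by move/H_reflectless/andP => [sx sy]; rewrite !(eq_sym _ s) sx sy. Qed.

Lemma homogeneous_setP (M : {set V}) :
  reflect (M != set0 /\
           forall s x y, s \notin M -> x \in M -> y \in M -> H s x y)
          (homogeneous_set H M).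
Proof.
apply: (iffP andP) => -[nM hM]; split=> //.
- move=> s x y sM xM yM; move/forallP/(_ s): hM; rewrite in_setC sM /=.
  apply: contraNT => Nxy; apply/existsP; exists x; rewrite xM.
  by apply/existsP; exists y; rewrite yM.
- apply/forallP=> s; apply/implyP; rewrite in_setC => sM.
  apply/existsPn=> x; apply/andP=> -[xM /existsP[y /andP[yM]]].
  by rewrite hM.
Qed.

Lemma homogeneous_setT : 0 < #|V| -> homogeneous_set H [set: V].
Proof.
move=> /card_gt0P[v _]; apply/homogeneous_setP.
by split=> [|s]; [apply/set0Pn; exists v|]; rewrite inE.
Qed.

Lemma homogeneous_set1 v : homogeneous_set H [set v].
Proof.
apply/homogeneous_setP; split=> [|s x y]; first by apply/set0Pn; exists v; rewrite inE.
by rewrite !inE => sv /eqP-> /eqP->; apply: H_refl; rewrite eq_sym.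
Qed.

Section Overlapping.
Variables A B : {set V}.
Hypotheses (hsA : homogeneous_set H A) (hsB : homogeneous_set H B).
Hypothesis AB0 : A :&: B != set0.

Let hA := proj2 (elimT (homogeneous_setP A) hsA).
Let hB := proj2 (elimT (homogeneous_setP B) hsB).

Lemma homogeneous_setI : homogeneous_set H (A :&: B).
Proof.
apply/homogeneous_setP; split=> // s x y.
by rewrite !inE negb_and => /orP[] sN /andP[xA xB] /andP[yA yB]; [apply: hA|apply: hB].
Qed.

Lemma homogeneous_setU : homogeneous_set H (A :|: B).
Proof.
have [z] := set0Pn _ AB0; rewrite inE => /andP[zA zB].
apply/homogeneous_setP; split.
  by apply/set0Pn; exists z; rewrite inE zA.
move=> s x y; rewrite !inE negb_or => /andP[sA sB].
have Hz w : (w \in A) || (w \in B) -> H s w z by case/orP=> ?; [apply: hA|apply: hB].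
by move=> /Hz Hx /Hz Hy; apply: H_trans Hx (H_sym Hy).
Qed.

End Overlapping.

Lemma homogeneous_setD (A B : {set V}) :
  homogeneous_set H A -> A :\: B != set0 ->
  (forall s x y, s \in A :&: B -> x \in A :\: B -> y \in A :\: B -> H s x y) ->
  homogeneous_set H (A :\: B).
Proof.
move=> /homogeneous_setP[_ hA] AB0 hAB; apply/homogeneous_setP; split=> // s x y.
move=> sAB xAB yAB; have [sA|sA] := boolP (s \in A).
  by apply: hAB; rewrite // inE sA /=; move: sAB; rewrite inE sA andbT negbK.
by apply: hA; [|move: xAB|move: yAB]; rewrite // inE => /andP[].
Qed.

Lemma weakly_partitive_homogeneous_set : 0 < #|V| ->
  (forall A B, homogeneous_set H A -> homogeneous_set H B ->
     forall s t, s \in A :&: B -> t \in B :\: A ->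
     forall x y, x \in A :\: B -> y \in A :\: B -> H s x y) ->
  weakly_partitive (homogeneous_set H).
Proof.
move=> V0 hD; split; first exact: homogeneous_setT.
split=> [|A B hsA hsB /and3P[AB0 AB /set0Pn[t tBA]]]; first exact: homogeneous_set1.
split; [exact: homogeneous_setI | exact: homogeneous_setU |].
by apply: homogeneous_setD => // s x y sAB; apply: (hD _ _ hsA hsB _ _ sAB tBA).
Qed.

Section Difference.
Variables A B : {set V}.
Hypotheses (hsA : homogeneous_set H A) (hsB : homogeneous_set H B).
Variables s t : V.
Hypotheses (sAB : s \in A :&: B) (tBA : t \in B :\: A).

Let hA := proj2 (elimT (homogeneous_setP A) hsA).
Let hB := proj2 (elimT (homogeneous_setP B) hsB).

Let sA : s \in A. Proof. by move: sAB; rewrite inE => /andP[]. Qed.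
Let sB : s \in B. Proof. by move: sAB; rewrite inE => /andP[]. Qed.
Let tB : t \in B. Proof. by move: tBA; rewrite inE => /andP[]. Qed.
Let tA : t \notin A. Proof. by move: tBA; rewrite inE => /andP[]. Qed.

Lemma A1_cross x : axiomA1 H -> x \in A :\: B -> H s x t.
Proof.
rewrite inE => A1 /andP[xB xA].
have Hx : H x t s by apply: hB.
have Ht : H t x s by apply: hA.
apply: (A1 _ _ _ _ _ _ Hx Ht); try exact: H_reflectless.
by rewrite /reflectless; have /andP[_ ->] := H_neq Hx; have /andP[_ ->] := H_neq Ht.
Qed.

Variables x y : V.
Hypotheses (xAB : x \in A :\: B) (yAB : y \in A :\: B).

Let xA : x \in A. Proof. by move: xAB; rewrite inE => /andP[]. Qed.
Let xB : x \notin B. Proof. by move: xAB; rewrite inE => /andP[]. Qed.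
Let yA : y \in A. Proof. by move: yAB; rewrite inE => /andP[]. Qed.
Let yB : y \notin B. Proof. by move: yAB; rewrite inE => /andP[]. Qed.

Lemma A1_diff : axiomA1 H -> H s x y.
Proof. by move=> A1; apply: H_trans (A1_cross A1 xAB) (H_sym (A1_cross A1 yAB)). Qed.

Lemma A2_diff : axiomA2 H -> H s x y.
Proof.
move=> A2; have Hx : H x s t by apply: hB.
have Hy : H y s t by apply: hB.
have Ht : H t x y by apply: hA.
apply: (A2 _ _ _ _ _ _ _ _ Hx Hy Ht); try exact: H_reflectless.
by rewrite /reflectless; have /andP[-> _] := H_neq Hx; have /andP[-> _] := H_neq Hy.
Qed.

Lemma A3_diff : axiomA3 H -> H s x y.
Proof.
move=> A3; have Hx : H x s t by apply: hB.
have Hy : H y s t by apply: hB.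
have Htx : H t s x by apply: hA.
have Hty : H t s y by apply: hA.
apply: (A3 _ _ _ _ _ _ _ _ _ Hx Hy Htx Hty); try exact: H_reflectless.
by rewrite /reflectless; have /andP[-> _] := H_neq Hx; have /andP[-> _] := H_neq Hy.
Qed.

End Difference.

Lemma homogeneous_setSD (A B : {set V}) : axiomA1 H ->
  homogeneous_set H A -> homogeneous_set H B -> overlap A B ->
  homogeneous_set H ((A :\: B) :|: (B :\: A)).
Proof.
move=> A1 hsA hsB /and3P[AB0 /set0Pn[u uAB] /set0Pn[t tBA]].
have /homogeneous_setP[_ hU] := homogeneous_setU hsA hsB AB0.
apply/homogeneous_setP; split=> [|s x y]; first by apply/set0Pn; exists t; rewrite inE tBA orbT.
have DU : {subset (A :\: B) :|: (B :\: A) <= A :|: B}.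
  by move=> w; rewrite !inE => /orP[]/andP[_ ->]; rewrite ?orbT.
have [sAB|sAB] := boolP (s \in A :&: B); last first.
  move=> sD /DU xU /DU yU; apply: hU xU yU.
  by move: sAB sD; rewrite !inE; case: (s \in A); case: (s \in B).
have Ht w : w \in (A :\: B) :|: (B :\: A) -> H s w t.
  rewrite in_setU => /orP[wAB|wBA]; first exact: (A1_cross hsA hsB sAB tBA A1 wAB).
  exact: H_trans (H_sym (A1_cross hsA hsB sAB wBA A1 uAB)) (A1_cross hsA hsB sAB tBA A1 uAB).
by move=> _ /Ht Hx /Ht Hy; apply: H_trans Hx (H_sym Hy).
Qed.

End HomogeneousSets.

Theorem mainTheorem8 (V : finType) (H : V -> V -> V -> bool) :
  0 < #|V| ->
  homogeneous_relation H ->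
  ((axiomA2 H \/ axiomA3 H) -> weakly_partitive (homogeneous_set H)) /\
  (axiomA1 H -> partitive (homogeneous_set H)).
Proof.
move=> V0 homH; have wp := weakly_partitive_homogeneous_set homH V0.
split=> [A23|A1].
  apply: wp => A B hsA hsB s t sAB tBA x y xAB yAB; case: A23 => [A2|A3].
  - exact: (A2_diff homH hsA hsB sAB tBA xAB yAB A2).
  - exact: (A3_diff homH hsA hsB sAB tBA xAB yAB A3).
split; last by move=> A B; apply: (homogeneous_setSD homH).
apply: wp => A B hsA hsB s t sAB tBA x y xAB yAB.
exact: (A1_diff homH hsA hsB sAB tBA xAB yAB A1).
Qed.
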